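(* In the setting of the context, fix $\beta>0$. Then $\omega\in\overline{W_{\overline{\mathbb{R}}\times\{\beta\}}(T)\setminus i\mathbb{R}}$ if and only if $\omega\in\{0,\infty\}$ (only $\omega=\infty$ if $c=0$), or $\omega_\Im\neq0$ and one of the following four equations holds: $$\omega_\Re=\pm\sqrt{P_{\omega_\Im}\pm\sqrt{P_{\omega_\Im}^2-Q_{\omega_\Im}}-\omega_\Im^2},$$ where $$P_{\omega_\Im}:=c-\frac{d^2}{2}-d\omega_\Im-\frac{\beta d}{4\omega_\Im},\qquad Q_{\omega_\Im}:=\beta c+c^2+2cd\omega_\Im+4c\omega_\Im^2.$$
   Context: Let $c\ge0$, $d>0$, $\delta_\pm:=\pm\sqrt{c-d^2/4}-id/2$; $\sqrt{\cdot}$ is the principal square root. For real $\alpha,\beta$ let $p_{(\alpha,\beta)}(\omega):=(\alpha-\omega^2)(c-id\omega-\omega^2)-\beta\omega^2$ with roots $r_1,\dots,r_4$ labelled continuously in $(\alpha,\beta)\in\mathbb{R}^2$ and extended by limits to $\alpha=\pm\infty$ (roots $\delta_+,\delta_-$ and $\infty$ twice), values in $\overline{\mathbb{C}}$. $W_{\overline{\mathbb{R}}\times\{\beta\}}(T):=\bigcup_{n=1}^4\{r_n(\alpha,\beta):\alpha\in\mathbb{R}\cup\{\pm\infty\}\}$; overline denotes closure in $\overline{\mathbb{C}}$; $\omega=\omega_\Re+i\omega_\Im$. *)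

From HB Require Import structures.
From mathcomp Require Import all_boot all_order all_algebra.
From mathcomp Require Import complex.
From mathcomp Require Import reals.
Set Implicit Arguments. Unset Strict Implicit. Unset Printing Implicit Defensive.
Import Order.TTheory GRing.Theory Num.Theory.
Local Open Scope ring_scope.
Local Open Scope complex_scope.

(* The extended complex plane: None is the point at infinity. *)
Definition extC (R : rcfType) := option R[i].

Definition pab (R : rcfType) (c d alpha beta : R) (w : R[i]) : R[i] :=
  (alpha%:C - w ^+ 2) * (c%:C - 'i * d%:C * w - w ^+ 2) - beta%:C * w ^+ 2.

Definition delta_p (R : rcfType) (c d : R) : R[i] :=
  sqrtc ((c - d ^+ 2 / 4%:R)%:C) - 'i * (d / 2%:R)%:C.
Definition delta_m (R : rcfType) (c d : R) : R[i] :=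
  - sqrtc ((c - d ^+ 2 / 4%:R)%:C) - 'i * (d / 2%:R)%:C.

(* W_{Rbar x {beta}}(T): union over alpha in R u {+oo,-oo} of all the roots
   r_1..r_4 of p_(alpha,beta), as a subset of the extended complex plane.
   For real alpha these are exactly the zeros of p_(alpha,beta); at
   alpha = +/-oo the (limit) roots are delta_+, delta_- and oo. *)
Definition W_beta (R : rcfType) (c d beta : R) : extC R -> Prop :=
  fun z => match z with
  | None => True
  | Some w => (exists alpha : R, pab c d alpha beta w = 0)
              \/ w = delta_p c d \/ w = delta_m c d
  end.

Definition reC (R : rcfType) (w : R[i]) : R := complex.Re w.
Definition imC (R : rcfType) (w : R[i]) : R := complex.Im w.

(* S \ iR  (the point oo does not lie on iR) *)
Definition minus_iR (R : rcfType) (S : extC R -> Prop) : extC R -> Prop :=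
  fun z => match z with
  | None => S None
  | Some w => S (Some w) /\ reC w != 0
  end.

Definition extC_closure (R : rcfType) (S : extC R -> Prop) : extC R -> Prop :=
  fun z => match z with
  | None => S None \/
            (forall M : R, exists w : R[i], S (Some w) /\ M%:C < `|w|)
  | Some w0 => forall e : R, 0 < e ->
            exists w : R[i], S (Some w) /\ `|w - w0| < e%:C
  end.

Definition Pfun (R : rcfType) (c d beta y : R) : R :=
  c - d ^+ 2 / 2%:R - d * y - beta * d / (4%:R * y).
Definition Qfun (R : rcfType) (c d beta y : R) : R :=
  beta * c + c ^+ 2 + 2%:R * c * d * y + 4%:R * c * y ^+ 2.

Definition sgnb (R : rcfType) (b : bool) : R[i] := if b then 1 else -1.

(* Write w = x + iy.  As p_(alpha,beta)(w) = (alpha - w^2) D(w) - beta w^2 with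
   D(w) = c - idw - w^2 = -(w - delta_+)(w - delta_-), eliminating the real unknown
   alpha from the real and imaginary parts of p(w) = 0 shows that a point with
   x <> 0 lies in W iff F(x^2, y) = 0, where (elimF, dampRe = s, dampIm = a)
     F(u, y) = 2y((s - u)^2 + u a^2) + beta (2cy + d(u + y^2)),
     s = c + dy + y^2,  a = d + 2y;
   the points delta_+-, where D vanishes, satisfy this equation as well.  For
   y <> 0, F(x^2, y) = 2y((x^2 + y^2 - P)^2 - (P^2 - Q)), whence the four branches.
   In the closure, limits of these points must still satisfy F(x^2, y) = 0.  On
   the real axis F(x^2, 0) = beta d x^2 leaves only the origin, which is a limit
   iff c <> 0: for c = 0, F(x^2, y) > 0 near the origin when x <> 0.  At iy0,
   y0 <> 0, with F(0, y0) = y0 K(y0) = 0, look for small roots u > 0 of the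
   quadratic F(u, y) = 2y u^2 + L(y) u + F(0, y) for y near y0: for small u,
   F(u, y) has the sign of L(y0) (of y0 if L(y0) = 0), while the Taylor expansion
   of K at y0 shows that F(0, y) takes the opposite sign arbitrarily close to y0,
   so the intermediate value theorem provides the root. *)

From HB Require Import structures.
From mathcomp Require Import all_boot all_order all_algebra.
From mathcomp Require Import complex.
From mathcomp Require Import reals.
From mathcomp Require Import ring lra polyrcf.
Import Order.TTheory GRing.Theory Num.Theory.
Set Implicit Arguments. Unset Strict Implicit. Unset Printing Implicit Defensive.
Local Open Scope ring_scope.
Local Open Scope complex_scope.

Section ComplexParts.
Variable R : rcfType.
Local Notation Re := (@complex.Re R).
Local Notation Im := (@complex.Im R).
Implicit Types (a b : R[i]).

Lemma ReD a b : Re (a + b) = Re a + Re b. Proof. by case: a b => ? ? [? ?]. Qed.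
Lemma ImD a b : Im (a + b) = Im a + Im b. Proof. by case: a b => ? ? [? ?]. Qed.
Lemma ReN a : Re (- a) = - Re a. Proof. by case: a. Qed.
Lemma ImN a : Im (- a) = - Im a. Proof. by case: a. Qed.
Lemma ReM a b : Re (a * b) = Re a * Re b - Im a * Im b.
Proof. by case: a b => ? ? [? ?]. Qed.
Lemma ImM a b : Im (a * b) = Re a * Im b + Im a * Re b.
Proof. by case: a b => ? ? [? ?]. Qed.
Lemma ReX2 a : Re (a ^+ 2) = Re a ^+ 2 - Im a ^+ 2.
Proof. by rewrite expr2 ReM !expr2. Qed.
Lemma ImX2 a : Im (a ^+ 2) = 2%:R * Re a * Im a.
Proof. by rewrite expr2 ImM; ring. Qed.

Lemma complex_ext a b : Re a = Re b -> Im a = Im b -> a = b.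
Proof. by case: a b => ? ? [? ?] /= -> ->. Qed.

End ComplexParts.

Definition ReImE := (ReD, ImD, ReN, ImN, ReM, ImM, ReX2, ImX2).

Ltac simpReIm := rewrite ?ReImE /=
  ?(mul0r, mulr0, mul1r, mulr1, subr0, add0r, addr0, sub0r, oppr0).

Section Elimination.
Variables (R : rcfType) (c d be : R).
Local Notation Re := (@complex.Re R).
Local Notation Im := (@complex.Im R).

Definition damp (w : R[i]) := c%:C - 'i * d%:C * w - w ^+ 2.
Definition dampRe (y : R) := c + d * y + y ^+ 2.
Definition dampIm (y : R) := d + 2%:R * y.

Definition elimF (u y : R) := 2%:R * y * ((dampRe y - u) ^+ 2 + u * dampIm y ^+ 2)
  + be * (2%:R * c * y + d * (u + y ^+ 2)).
Definition elimL (y : R) := 2%:R * y * (dampIm y ^+ 2 - 2%:R * dampRe y) + be * d.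
Definition elimK (y : R) := 2%:R * dampRe y ^+ 2 + be * (2%:R * c + d * y).

Lemma elimF_expand u y : elimF u y = 2%:R * y * u ^+ 2 + elimL y * u + elimF 0 y.
Proof. by rewrite /elimF /elimL; ring. Qed.

Lemma elimF0 y : elimF 0 y = y * elimK y.
Proof. by rewrite /elimF /elimK; ring. Qed.

Definition elimK1 (y : R) := 4%:R * dampRe y * dampIm y + be * d.
Definition elimK2 (y : R) := 2%:R * (dampIm y ^+ 2 + 2%:R * dampRe y).
Definition elimK3 (y : R) := 4%:R * dampIm y.

Lemma elimK_taylor (y h : R) : elimK (y + h) =
  elimK y + h * (elimK1 y + h * (elimK2 y + h * (elimK3 y + 2%:R * h))).
Proof. by rewrite /elimK /elimK1 /elimK2 /elimK3 /dampRe /dampIm; ring. Qed.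

Lemma dampE x y : damp (x +i* y) = (dampRe y - x ^+ 2) +i* (- x * dampIm y).
Proof. by apply: complex_ext; rewrite /damp /dampRe /dampIm; simpReIm; ring. Qed.

Lemma damp_factor w : damp w = - ((w - delta_p c d) * (w - delta_m c d)).
Proof.
rewrite /damp /delta_p /delta_m; set S := sqrtc _; set h := (d / 2%:R)%:C.
have -> : forall a, - ((a - (S - 'i * h)) * (a - (- S - 'i * h))) = S ^+ 2 - (a + 'i * h) ^+ 2.
  by move=> a; ring.
by rewrite sqr_sqrtc; case: w => x y; apply: complex_ext; simpReIm; field.
Qed.

Lemma damp_eq0 w : damp w = 0 <-> w = delta_p c d \/ w = delta_m c d.
Proof.
rewrite damp_factor; split.
  by move/eqP; rewrite oppr_eq0 mulf_eq0 !subr_eq0 => /orP[] /eqP; [left|right].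
by case=> ->; rewrite subrr ?mul0r ?mulr0 oppr0.
Qed.

Lemma pab_Re al x y : Re (pab c d al be (x +i* y)) =
  (al - (x ^+ 2 - y ^+ 2)) * (dampRe y - x ^+ 2)
  - 2%:R * x * y * (x * dampIm y) - be * (x ^+ 2 - y ^+ 2).
Proof. by rewrite /pab /dampRe /dampIm; simpReIm; ring. Qed.

Lemma pab_Im al x y : Im (pab c d al be (x +i* y)) =
  - (al - (x ^+ 2 - y ^+ 2)) * (x * dampIm y)
  - 2%:R * x * y * (dampRe y - x ^+ 2) - be * (2%:R * x * y).
Proof. by rewrite /pab /dampRe /dampIm; simpReIm; ring. Qed.

Lemma elimF_damp0 x y : x != 0 -> damp (x +i* y) = 0 -> elimF (x ^+ 2) y = 0.
Proof.
rewrite dampE => hx [/eqP hA /eqP hB].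
have hx2 : x ^+ 2 = dampRe y by move: hA; rewrite subr_eq0 => /eqP.
have hy : y = - d / 2%:R.
  by move: hB; rewrite mulNr oppr_eq0 mulf_eq0 (negbTE hx) /dampIm => /eqP h; lra.
by rewrite /elimF hx2 subrr hy /dampRe /dampIm; field.
Qed.

Lemma exists_alpha_root x y : x != 0 -> damp (x +i* y) != 0 ->
  (exists al, pab c d al be (x +i* y) = 0) <-> elimF (x ^+ 2) y = 0.
Proof.
rewrite dampE => hx hD.
set A := dampRe y - x ^+ 2 in hD *; set B := x * dampIm y.
have hN : A ^+ 2 + B ^+ 2 != 0.
  apply: contraNneq hD => /eqP; rewrite paddr_eq0 ?sqr_ge0 // !sqrf_eq0.
  by case/andP=> /eqP -> /eqP hB; rewrite mulNr -/B hB oppr0.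
have elim_alpha al : B * Re (pab c d al be (x +i* y)) + A * Im (pab c d al be (x +i* y))
    = - x * elimF (x ^+ 2) y.
  by rewrite pab_Re pab_Im /A /B /elimF /dampRe /dampIm; ring.
split=> [[al hp]|hF].
  move: (elim_alpha al); rewrite hp /= !mulr0 addr0 => /esym/eqP.
  by rewrite mulf_eq0 oppr_eq0 (negbTE hx) => /eqP.
(* t = alpha - Re (w ^+ 2) solves the linear system Re p = Im p = 0 in alpha. *)
pose t := be * ((x ^+ 2 - y ^+ 2) * A - 2%:R * x * y * B) / (A ^+ 2 + B ^+ 2).
exists (x ^+ 2 - y ^+ 2 + t); apply: complex_ext; rewrite ?pab_Re ?pab_Im /=.
  transitivity (- B * (x * elimF (x ^+ 2) y) / (A ^+ 2 + B ^+ 2)).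
    by rewrite /t /A /B /elimF /dampRe /dampIm; field.
  by rewrite hF !mulr0 mul0r.
transitivity (- A * (x * elimF (x ^+ 2) y) / (A ^+ 2 + B ^+ 2)).
  by rewrite /t /A /B /elimF /dampRe /dampIm; field.
by rewrite hF !mulr0 mul0r.
Qed.

Lemma W_beta_offiR w : Re w != 0 ->
  W_beta c d be (Some w) <-> elimF (Re w ^+ 2) (Im w) = 0.
Proof.
case: w => x y /= hx.
have [h0|h0] := eqVneq (damp (x +i* y)) 0.
  by split=> _; [exact: elimF_damp0 | right; apply/damp_eq0].
rewrite -exists_alpha_root //; split; last by left.
by case=> // /damp_eq0 hD; rewrite hD eqxx in h0.
Qed.

End Elimination.

Lemma sgnb_sqrtcP (R : rcfType) (z q : R[i]) :
  (exists s, z = sgnb R s * sqrtc q) <-> z ^+ 2 = q.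
Proof.
split=> [[s ->]|hz].
  by rewrite exprMn sqr_sqrtc; case: s; rewrite /sgnb ?sqrrN expr1n mul1r.
have : (z - sqrtc q) * (z + sqrtc q) = 0 by rewrite -subr_sqr sqr_sqrtc hz subrr.
move/eqP; rewrite mulf_eq0 subr_eq0 addr_eq0 => /orP[] /eqP ->.
  by exists true; rewrite mul1r.
by exists false; rewrite mulN1r.
Qed.

Section Branches.
Variables (R : rcfType) (c d be : R).
Local Notation P := (Pfun c d be).
Local Notation Q := (Qfun c d be).

Lemma elimF_PQ u y : y != 0 ->
  elimF c d be u y = 2%:R * y * ((u + y ^+ 2 - P y) ^+ 2 - (P y ^+ 2 - Q y)).
Proof. by move=> hy; rewrite /elimF /dampRe /dampIm /Pfun /Qfun; field. Qed.

Lemma branch_formulaP (w : R[i]) : imC w != 0 ->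
  (exists s1 s2 : bool, (reC w)%:C = sgnb R s1 * sqrtc ((P (imC w))%:C
      + sgnb R s2 * sqrtc ((P (imC w) ^+ 2 - Q (imC w))%:C) - (imC w ^+ 2)%:C))
  <-> elimF c d be (reC w ^+ 2) (imC w) = 0.
Proof.
case: w => x y; rewrite /reC /imC -[complex.Re _]/x -[complex.Im _]/y => hy.
set S := sqrtc _; move Zdef : (x ^+ 2 + y ^+ 2 - P y)%:C => Z.
have hZ : Z = x%:C ^+ 2 + (y ^+ 2)%:C - (P y)%:C by rewrite -Zdef !(rmorphB, rmorphD, rmorphXn).
have branch s : x%:C ^+ 2 = (P y)%:C + sgnb R s * S - (y ^+ 2)%:C <-> Z = sgnb R s * S.
  split=> h; first by rewrite hZ h; ring.
  have -> : x%:C ^+ 2 = Z - (y ^+ 2)%:C + (P y)%:C by rewrite hZ; ring.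
  by rewrite h; ring.
transitivity (exists s2, Z = sgnb R s2 * S).
  split=> [[s1 [s2 /(ex_intro _ s1) /sgnb_sqrtcP]] | [s2 /branch /sgnb_sqrtcP [s1 h]]].
    by move/branch; exists s2.
  by exists s1, s2.
rewrite sgnb_sqrtcP elimF_PQ // -Zdef -rmorphXn.
split=> [/complexI ->|/eqP]; first by rewrite subrr mulr0.
by rewrite mulf_eq0 mulf_eq0 pnatr_eq0 (negbTE hy) /= subr_eq0 => /eqP ->.
Qed.

End Branches.

Lemma same_sign_gt0 (R : realDomainType) (a b k : R) :
  0 < a * k -> 0 < b * k -> 0 < a * b.
Proof.
move=> hak hbk; have hk : k != 0 by apply: contraTneq hak => ->; rewrite mulr0 ltxx.
have hk2 : 0 < k * k by rewrite -expr2 exprn_even_gt0.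
by rewrite -(pmulr_lgt0 _ hk2) mulrACA mulr_gt0.
Qed.

Section Continuity.
Variable R : rcfType.
Implicit Types (f g : R -> R -> R).

Definition cont2_at f x0 y0 := forall e, 0 < e ->
  exists2 r, 0 < r & forall x y, `|x - x0| < r -> `|y - y0| < r ->
    `|f x y - f x0 y0| < e.

Lemma cont2_at_cst (k : R) x0 y0 : cont2_at (fun _ _ => k) x0 y0.
Proof. by move=> e he; exists 1 => // x y _ _; rewrite subrr normr0. Qed.

Lemma cont2_at_fst x0 y0 : cont2_at (fun x _ => x) x0 y0.
Proof. by move=> e he; exists e. Qed.

Lemma cont2_at_snd x0 y0 : cont2_at (fun _ y => y) x0 y0.
Proof. by move=> e he; exists e. Qed.

Lemma cont2_atN f x0 y0 : cont2_at f x0 y0 -> cont2_at (fun x y => - f x y) x0 y0.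
Proof.
move=> hf e /hf[r hr H]; exists r => // x y hx hy.
by rewrite -opprD normrN; apply: H.
Qed.

Lemma cont2_atD f g x0 y0 : cont2_at f x0 y0 -> cont2_at g x0 y0 ->
  cont2_at (fun x y => f x y + g x y) x0 y0.
Proof.
move=> hf hg e he; have he2 : 0 < e / 2%:R by rewrite divr_gt0 ?ltr0n.
have [[rf hrf Hf] [rg hrg Hg]] := (hf _ he2, hg _ he2).
exists (Num.min rf rg) => [|x y]; first by rewrite lt_min hrf hrg.
rewrite !lt_min => /andP[hxf hxg] /andP[hyf hyg].
rewrite opprD addrACA.
apply: (le_lt_trans (ler_normD _ _)).
by have := Hf _ _ hxf hyf; have := Hg _ _ hxg hyg; lra.
Qed.

Lemma cont2_atM f g x0 y0 : cont2_at f x0 y0 -> cont2_at g x0 y0 ->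
  cont2_at (fun x y => f x y * g x y) x0 y0.
Proof.
move=> hf hg e he.
set A := `|f x0 y0|; set B := `|g x0 y0|.
have hA : 0 <= A := normr_ge0 _; have hB : 0 <= B := normr_ge0 _.
set r0 := Num.min 1 (e / (2%:R * (1 + A + B))).
have hr0 : 0 < r0 by rewrite lt_min ltr01 divr_gt0 ?mulr_gt0 ?ltr0n //; lra.
have hr01 : r0 <= 1 by rewrite ge_min lexx.
have hr0e : r0 * (1 + A + B) <= e / 2%:R.
  have hpos : 0 < 2%:R * (1 + A + B) by rewrite mulr_gt0 ?ltr0n //; lra.
  have : r0 <= e / (2%:R * (1 + A + B)) by rewrite ge_min lexx orbT.
  by rewrite ler_pdivlMr // ler_pdivlMr ?ltr0n //; lra.
have [[rf hrf Hf] [rg hrg Hg]] := (hf _ hr0, hg _ hr0).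
exists (Num.min rf rg) => [|x y]; first by rewrite lt_min hrf hrg.
rewrite !lt_min => /andP[hxf hxg] /andP[hyf hyg].
have := Hf _ _ hxf hyf; have := Hg _ _ hxg hyg.
set a := f x y - f x0 y0; set b := g x y - g x0 y0 => hb ha.
rewrite (_ : _ - _ = a * b + f x0 y0 * b + g x0 y0 * a); last by rewrite /a /b; ring.
apply: (le_lt_trans (ler_normD _ _)); apply: (le_lt_trans (lerD (ler_normD _ _) (lexx _))).
rewrite !normrM -/A -/B.
have [h0a h0b] := (normr_ge0 a, normr_ge0 b).
have : `|a| * `|b| <= r0 by nra.
have : A * `|b| <= A * r0 by rewrite ler_wpM2l // ltW.
have : B * `|a| <= B * r0 by rewrite ler_wpM2l // ltW.
nra.
Qed.

Lemma cont2_atX f n x0 y0 : cont2_at f x0 y0 -> cont2_at (fun x y => f x y ^+ n) x0 y0.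
Proof.
move=> hf; elim: n => [|n IH]; first exact: cont2_at_cst.
move=> e /(cont2_atM hf IH)[r hr H]; exists r => // x y hx hy.
by rewrite !exprS; apply: H.
Qed.

Lemma cont2_at_sign f x0 y0 : cont2_at f x0 y0 -> f x0 y0 != 0 ->
  exists2 r, 0 < r & forall x y, `|x - x0| < r -> `|y - y0| < r -> 0 < f x y * f x0 y0.
Proof.
move=> hf hf0; have hv : 0 < `|f x0 y0| by rewrite normr_gt0.
have [r hr H] := hf _ hv; exists r => // x y hx hy.
have := H x y hx hy; set v := f x0 y0; set fxy := f x y => hclose.
have hvv : v * v = `|v| * `|v| by rewrite -!expr2 real_normK ?num_real.
have : - ((fxy - v) * v) <= `|fxy - v| * `|v| by rewrite -normrM -normrN ler_norm.
nra.
Qed.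

Definition cont_at (g : R -> R) t0 := cont2_at (fun _ t => g t) 0 t0.

Lemma cont_atP (g : R -> R) t0 : cont_at g t0 -> forall e, 0 < e ->
  exists2 r, 0 < r & forall t, `|t - t0| < r -> `|g t - g t0| < e.
Proof.
move=> hg e /hg[r hr H]; exists r => // t ht.
by apply: (H 0) => //; rewrite subrr normr0.
Qed.

Lemma cont_at_sign (g : R -> R) t0 : cont_at g t0 -> g t0 != 0 ->
  exists2 r, 0 < r & forall t, `|t - t0| < r -> 0 < g t * g t0.
Proof.
move=> /cont2_at_sign /[apply] -[r hr H]; exists r => // t ht.
by apply: (H 0) => //; rewrite subrr normr0.
Qed.

Lemma lowest_term_sign (g : R -> R) n tau : cont_at g 0 -> tau != 0 -> g 0 != 0 ->
  odd n || (0 < tau * g 0) ->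
  forall r, 0 < r -> exists h, `|h| < r /\ 0 < tau * (h ^+ n * g h).
Proof.
move=> hg ht hg0 hpar r hr.
have [r' hr' hsg] := cont_at_sign hg hg0.
set m := Num.min r r' / 2%:R.
have hm : 0 < m by rewrite divr_gt0 ?ltr0n // lt_min hr hr'.
have [hmr hmr'] : m < r /\ m < r'.
  have : Num.min r r' <= r /\ Num.min r r' <= r' by rewrite !ge_min !lexx orbT.
  by rewrite /m; lra.
have [htg|htg] := ltP 0 (tau * g 0).
  exists m; split; first by rewrite gtr0_norm.
  have hgm : 0 < g m * g 0 by apply: hsg; rewrite subr0 gtr0_norm.
  have -> : tau * (m ^+ n * g m) = m ^+ n * (tau * g m) by ring.
  by rewrite mulr_gt0 ?exprn_gt0 // (same_sign_gt0 htg) // mulrC.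
have hodd : odd n by move: hpar; rewrite ltNge htg orbF.
have htg' : 0 < - tau * g 0 by rewrite mulNr oppr_gt0 lt_neqAle htg mulf_neq0.
exists (- m); split; first by rewrite normrN gtr0_norm.
have hgm : 0 < g (- m) * g 0 by apply: hsg; rewrite subr0 normrN gtr0_norm.
rewrite exprNn -signr_odd hodd expr1 mulN1r.
have -> : tau * (- m ^+ n * g (- m)) = m ^+ n * (- tau * g (- m)) by ring.
by rewrite mulr_gt0 ?exprn_gt0 // (same_sign_gt0 htg') // mulrC.
Qed.

End Continuity.

Ltac cont2_tac := rewrite ?/cont_at; repeat first
  [ apply: cont2_atD | apply: cont2_atN | apply: cont2_atM | apply: cont2_atX
  | apply: cont2_at_fst | apply: cont2_at_snd | apply: cont2_at_cst ].

Lemma linear_term_sign (R : realFieldType) (l h z u : R) : 0 < u ->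
  `|h - l| < `|l| / 2%:R -> `|z| < u * (`|l| / 2%:R) -> 0 < l * (u * h + z).
Proof.
move=> hu hh hz.
have hl : 0 < `|l| by have := le_lt_trans (normr_ge0 _) hh; lra.
have hll : l * l = `|l| * `|l| by rewrite -!expr2 real_normK ?num_real.
have e1 : - (l * (h - l)) <= `|l| * `|h - l| by rewrite -normrM -normrN ler_norm.
have e2 : - (l * z) <= `|l| * `|z| by rewrite -normrM -normrN ler_norm.
have e3 : `|l| * `|h - l| < `|l| * (`|l| / 2%:R) by rewrite ltr_pM2l.
have e4 : `|l| * `|z| < `|l| * (u * (`|l| / 2%:R)) by rewrite ltr_pM2l.
have e5 : 0 < u * (l * h - `|l| * `|l| / 2%:R) by apply: mulr_gt0 => //; nra.
nra.
Qed.

Section LimitsOfZeros.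
Variables (R : rcfType) (c d be : R).
Hypotheses (hc : 0 <= c) (hd : 0 < d) (hb : 0 < be).
Implicit Types (x y u h e r tau : R).
Local Notation F := (elimF c d be).
Local Notation L := (elimL c d be).
Local Notation K := (elimK c d be).
Local Notation K1 := (elimK1 c d be).
Local Notation K2 := (elimK2 c d).
Local Notation K3 := (elimK3 d).

Definition limit_of_zeros x0 y0 := forall e, 0 < e -> exists x y,
  [/\ x != 0, F (x ^+ 2) y = 0, `|x - x0| < e & `|y - y0| < e].

Lemma cont2_at_elimF x0 y0 : cont2_at (fun x y => F (x ^+ 2) y) x0 y0.
Proof. by rewrite /elimF /dampRe /dampIm; cont2_tac. Qed.

Lemma cont_at_elimL y0 : cont_at L y0.
Proof. by rewrite /elimL /dampRe /dampIm; cont2_tac. Qed.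

Lemma cont_at_elimF0 y0 : cont_at (F 0) y0.
Proof. by rewrite /elimF /dampRe /dampIm; cont2_tac. Qed.

Lemma cont_at_elimK y0 : cont_at K y0.
Proof. by rewrite /elimK /dampRe /dampIm; cont2_tac. Qed.

Lemma limit_of_zeros_root x0 y0 : limit_of_zeros x0 y0 -> F (x0 ^+ 2) y0 = 0.
Proof.
move=> H; apply/eqP; apply: contraT => hF.
have [r hr Hr] := cont2_at_sign (cont2_at_elimF x0 y0) hF.
have [x [y [_ hxy hx hy]]] := H r hr.
by have := Hr x y hx hy; rewrite hxy mul0r ltxx.
Qed.

Lemma elimF_small_root y u1 : 0 < u1 -> F 0 y * F u1 y < 0 ->
  exists x, [/\ x != 0, F (x ^+ 2) y = 0 & x ^+ 2 < u1].
Proof.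
move=> hu1 hsg.
pose p : {poly R} := (2%:R * y)%:P * 'X ^+ 2 + (L y)%:P * 'X + (F 0 y)%:P.
have hp u : p.[u] = F u y.
  by rewrite /p !hornerD !hornerCM hornerXn hornerX hornerC [RHS]elimF_expand.
have hsgp : p.[0] * p.[u1] < 0 by rewrite !hp.
have [u] := poly_ivtoo (ltW hu1) hsgp.
rewrite in_itv /= => /andP[hu0 hu1u] /rootP; rewrite hp => hFu.
exists (Num.sqrt u); rewrite sqr_sqrtr ?ltW //.
by split => //; rewrite gt_eqF // sqrtr_gt0.
Qed.

Lemma limit_of_zeros_signs y0 tau :
  (forall e, 0 < e -> exists2 u, 0 < u < e &
     exists2 r, 0 < r & forall y, `|y - y0| < r -> 0 < tau * F u y) ->
  (forall r, 0 < r -> exists y, `|y - y0| < r /\ tau * F 0 y < 0) ->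
  limit_of_zeros 0 y0.
Proof.
move=> hFu hF0 e he.
have [u /andP[hu0 hue] [r hr Hr]] := hFu _ (exprn_gt0 2 he).
have [y [hy htau]] : exists y, `|y - y0| < Num.min r e /\ tau * F 0 y < 0.
  by apply: hF0; rewrite lt_min hr he.
move: hy; rewrite lt_min => /andP[hyr hye].
have hFuy := Hr y hyr.
have hneg : 0 < - F 0 y * F u y.
  by apply: (same_sign_gt0 (k := tau)); rewrite mulrC ?mulrN ?oppr_gt0.
have [x [hx hFx hxu]] : exists x, [/\ x != 0, F (x ^+ 2) y = 0 & x ^+ 2 < u].
  by apply: elimF_small_root; rewrite // -oppr_gt0 -mulNr.
exists x, y; split=> //; rewrite subr0.
have := normr_ge0 x; have := real_normK (num_real x); nra.
Qed.

Lemma elimF_sign_lin y0 : F 0 y0 = 0 -> L y0 != 0 -> forall e, 0 < e ->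
  exists2 u, 0 < u < e &
    exists2 r, 0 < r & forall y, `|y - y0| < r -> 0 < L y0 * F u y.
Proof.
move=> hZ hL e he.
have hl : 0 < `|L y0| / 2%:R by rewrite divr_gt0 ?normr_gt0 ?ltr0n.
have hH : cont2_at (fun v y => 2%:R * y * v + L y) 0 y0.
  by rewrite /elimL /dampRe /dampIm; cont2_tac.
have [r1 hr1 H1] := hH _ hl.
set u := Num.min e r1 / 2%:R.
have [hu hue hur] : [/\ 0 < u, u < e & u < r1].
  have : 0 < Num.min e r1 by rewrite lt_min he hr1.
  have : Num.min e r1 <= e /\ Num.min e r1 <= r1 by rewrite !ge_min !lexx orbT.
  by rewrite /u; split; lra.
have [r2 hr2 H2] := cont_atP (cont_at_elimF0 y0) (mulr_gt0 hu hl).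
exists u; first by rewrite hu hue.
exists (Num.min r1 r2) => [|y]; first by rewrite lt_min hr1 hr2.
rewrite lt_min => /andP[hy1 hy2].
have hu1 : `|u - 0| < r1 by rewrite subr0 gtr0_norm.
have := H1 u y hu1 hy1; rewrite mulr0 add0r => hHy.
have := H2 y hy2; rewrite hZ subr0 => hZy.
rewrite elimF_expand (_ : _ + _ + _ = u * (2%:R * y * u + L y) + F 0 y); last by ring.
exact: linear_term_sign.
Qed.

Lemma elimF_sign_quad y0 : y0 < 0 -> F 0 y0 = 0 -> L y0 = 0 -> forall e, 0 < e ->
  exists2 u, 0 < u < e &
    exists2 r, 0 < r & forall y, `|y - y0| < r -> 0 < -1 * F u y.
Proof.
move=> hy0 hZ hL e he.
set m := - y0; have hm : 0 < m by rewrite oppr_gt0.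
set u := e / 2%:R; have hu : 0 < u by rewrite divr_gt0 ?ltr0n.
have hu2 : 0 < u ^+ 2 by rewrite exprn_gt0.
have [r1 hr1 H1] := cont_atP (cont_at_elimL y0) (divr_gt0 (mulr_gt0 hm hu) (ltr0n _ 4)).
have [r2 hr2 H2] := cont_atP (cont_at_elimF0 y0) (divr_gt0 (mulr_gt0 hm hu2) (ltr0n _ 4)).
exists u; first by rewrite hu /u; lra.
exists (Num.min (m / 2%:R) (Num.min r1 r2)) => [|y].
  by rewrite !lt_min hr1 hr2 divr_gt0 ?ltr0n.
rewrite !lt_min => /and3P[hym hy1 hy2].
have := H1 y hy1; rewrite hL subr0 => hLy.
have := H2 y hy2; rewrite hZ subr0 => hZy.
have hy : y < - (m / 2%:R) by move: hym; rewrite ltr_norml /m => /andP[_]; lra.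
have e1 : 2%:R * y * u ^+ 2 < - m * u ^+ 2.
  by rewrite -mulrA [_ * (y * _)]mulrA ltr_pM2r //; lra.
have e2 : L y * u <= `|L y| * u by rewrite ler_pM2r // ler_norm.
have e3 : `|L y| * u < m * u / 4%:R * u by rewrite ltr_pM2r.
have e4 := ler_norm (F 0 y).
rewrite elimF_expand; nra.
Qed.

Lemma elimK_root_neg y : y != 0 -> K y = 0 -> y < 0.
Proof.
move=> hy hK; rewrite lt_neqAle hy leNgt /=; apply/negP => hy0.
have : 0 < be * (2%:R * c + d * y).
  apply: mulr_gt0 => //; have := mulr_gt0 hd hy0.
  have := mulr_ge0 (ler0n R 2) hc; lra.
by move: hK; rewrite /elimK; have := sqr_ge0 (dampRe c d y); lra.
Qed.

Lemma elimK_double_root y : K y = 0 -> K1 y = 0 ->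
  y * K2 y + 3%:R * L y = 0 /\ K3 y != 0.
Proof.
rewrite /elimK1 /elimK3; set s := dampRe c d y; set a := dampIm d y => hK hK1.
have hbd : be * d != 0 by rewrite mulf_neq0 ?gt_eqF.
have hs : s != 0 by apply: contra_eq_neq hK1 => ->; rewrite mulr0 mul0r add0r.
have ha : a != 0 by apply: contra_eq_neq hK1 => ->; rewrite mulr0 add0r.
split; last by rewrite mulf_neq0 ?pnatr_eq0.
(* With t := c + d y / 2, s (d s - 4 a t) is a combination of K y and K1 y, and
   y K2 y + 3 L y = 4 (d s - 4 a t) + 3 K1 y. *)
set t := c + d * y / 2%:R.
have e1 : s * (d * s - 4%:R * a * t) = d * K y / 2%:R - t * (4%:R * s * a + be * d).
  by rewrite /t /s /a /elimK /dampRe /dampIm; field.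
have e2 : d * s - 4%:R * a * t = 0.
  move: e1; rewrite hK hK1 mulr0 mul0r mulr0 subr0 => /eqP.
  by rewrite mulf_eq0 (negbTE hs) => /eqP.
transitivity (4%:R * (d * s - 4%:R * a * t) + 3%:R * (4%:R * s * a + be * d)).
  by rewrite /t /s /a /elimK2 /elimL /dampRe /dampIm; field.
by rewrite e2 hK1; ring.
Qed.

Lemma elimK_sign_near y0 tau : K y0 = 0 -> tau != 0 ->
  (K1 y0 = 0 -> 0 < tau * K2 y0 \/ K2 y0 = 0) ->
  forall r, 0 < r -> exists h, `|h| < r /\ 0 < tau * K (y0 + h).
Proof.
move=> hK ht hk2.
suff [n [g [hg hg0 hpar hKg]]] : exists n g, [/\ cont_at g 0, g 0 != 0,
    odd n || (0 < tau * g 0) & forall h, K (y0 + h) = h ^+ n * g h].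
  by move=> r /(lowest_term_sign hg ht hg0 hpar)[h [hh hpos]]; exists h; rewrite hKg.
have [k1|k1] := eqVneq (K1 y0) 0; last first.
  exists 1%N, (fun h => K1 y0 + h * (K2 y0 + h * (K3 y0 + 2%:R * h)));
  by split; [cont2_tac | rewrite mul0r addr0 | | move=> h; rewrite elimK_taylor hK add0r].
have [_ hk3] := elimK_double_root hK k1.
case: (hk2 k1) => [hk2'|k2].
  exists 2%N, (fun h => K2 y0 + h * (K3 y0 + 2%:R * h)); split; first by cont2_tac.
  - by rewrite mul0r addr0; apply: contraTneq hk2' => ->; rewrite mulr0 ltxx.
  - by rewrite mul0r addr0 hk2' orbT.
  by move=> h; rewrite elimK_taylor hK k1 add0r; ring.
exists 3%N, (fun h => K3 y0 + 2%:R * h); split; first by cont2_tac.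
- by rewrite mulr0 addr0.
- by [].
by move=> h; rewrite elimK_taylor hK k1 k2 add0r; ring.
Qed.

Lemma elimF0_sign_near y0 tau : y0 < 0 ->
  (forall r, 0 < r -> exists h, `|h| < r /\ 0 < tau * K (y0 + h)) ->
  forall r, 0 < r -> exists y, `|y - y0| < r /\ tau * F 0 y < 0.
Proof.
move=> hy0 hK r hr.
have [h [hh hpos]] : exists h, `|h| < Num.min r (- y0) /\ 0 < tau * K (y0 + h).
  by apply: hK; rewrite lt_min hr oppr_gt0.
move: hh; rewrite lt_min => /andP[hhr hhy].
exists (y0 + h); rewrite addrC addKr; split=> //.
have : y0 + h < 0 by move: hhy; rewrite ltr_norml => /andP[_]; lra.
by rewrite elimF0; nra.
Qed.

Lemma limit_of_zeros_axis y0 : y0 != 0 -> K y0 = 0 -> limit_of_zeros 0 y0.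
Proof.
move=> hy0 hK; have hneg := elimK_root_neg hy0 hK.
have hF0 : F 0 y0 = 0 by rewrite elimF0 hK mulr0.
have hrel k1 := (elimK_double_root hK k1).1.
have [hL|hL] := eqVneq (L y0) 0.
  apply: (limit_of_zeros_signs (elimF_sign_quad hneg hF0 hL)).
  apply: (elimF0_sign_near hneg); apply: elimK_sign_near => // [|k1].
    by rewrite oppr_eq0 oner_eq0.
  right; move: (hrel k1); rewrite hL mulr0 addr0 => /eqP.
  by rewrite mulf_eq0 (negbTE hy0) => /eqP.
apply: (limit_of_zeros_signs (elimF_sign_lin hF0 hL)).
apply: (elimF0_sign_near hneg); apply: elimK_sign_near => // k1; left.
have e : L y0 * (y0 * K2 y0 + 3%:R * L y0) = 0 by rewrite hrel // mulr0.
have : 0 < L y0 ^+ 2 by rewrite exprn_even_gt0.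
nra.
Qed.

Lemma damp_sq_bound u y : c = 0 -> 0 <= u <= 1 -> `|y| <= 1 ->
  (dampRe c d y - u) ^+ 2 + u * dampIm d y ^+ 2
    <= (2%:R * (d + 1) ^+ 2 + 2%:R + (d + 2%:R) ^+ 2) * (u + y ^+ 2).
Proof.
rewrite /dampRe /dampIm => -> /andP[hu0 hu1]; rewrite ler_norml => /andP[hy1 hy2].
have e1 : (0 + d * y + y ^+ 2 - u) ^+ 2 <= 2%:R * (d * y + y ^+ 2) ^+ 2 + 2%:R * u ^+ 2.
  by have := sqr_ge0 (d * y + y ^+ 2 + u); nra.
have e2 : (d * y + y ^+ 2) ^+ 2 <= (d + 1) ^+ 2 * y ^+ 2.
  rewrite (_ : d * y + y ^+ 2 = y * (d + y)); last by ring.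
  rewrite exprMn [X in _ <= X]mulrC ler_wpM2l ?sqr_ge0 //.
  have : 0 <= (1 - y) * (2%:R * d + 1 + y) by apply: mulr_ge0; have := hd; lra.
  nra.
have e3 : u ^+ 2 <= u by nra.
have e4 : u * (d + 2%:R * y) ^+ 2 <= u * (d + 2%:R) ^+ 2.
  rewrite ler_wpM2l //.
  have : 0 <= (1 - y) * (d + 1 + y) by apply: mulr_ge0; have := hd; lra.
  nra.
have := mulr_ge0 (sqr_ge0 (d + 1)) hu0; have := mulr_ge0 (sqr_ge0 (d + 2%:R)) (sqr_ge0 y).
have := sqr_ge0 y; lra.
Qed.

Lemma elimF_neq0_near_origin : c = 0 -> exists2 r, 0 < r &
  forall x y, `|x| < r -> `|y| < r -> x != 0 -> F (x ^+ 2) y != 0.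
Proof.
move=> hc0; set M := 2%:R * (d + 1) ^+ 2 + 2%:R + (d + 2%:R) ^+ 2.
have hM : 0 < M by rewrite /M; have := sqr_ge0 (d + 1); have := sqr_ge0 (d + 2%:R); lra.
have hbd : 0 < be * d by rewrite mulr_gt0.
exists (Num.min 1 (be * d / (2%:R * M))).
  by rewrite lt_min ltr01 divr_gt0 ?mulr_gt0 ?ltr0n.
move=> x y; rewrite !lt_min => /andP[hx1 hxM] /andP[hy1 hyM] hx.
have hyM' : 2%:R * `|y| * M < be * d.
  by move: hyM; rewrite ltr_pdivlMr ?mulr_gt0 ?ltr0n //; lra.
have hx2 : 0 < x ^+ 2 by rewrite exprn_even_gt0.
have hx21 : x ^+ 2 <= 1 by rewrite -real_normK ?num_real //; have := normr_ge0 x; nra.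
have hu : 0 <= x ^+ 2 <= 1 by rewrite sqr_ge0 hx21.
have := damp_sq_bound hc0 hu (ltW hy1); rewrite -/M.
set T := _ + _ => hT.
have hT0 : 0 <= T by rewrite addr_ge0 ?sqr_ge0 // mulr_ge0 ?sqr_ge0 // ltW.
have hpos : 0 < x ^+ 2 + y ^+ 2 by have := sqr_ge0 y; lra.
have e1 : - (2%:R * y * T) <= 2%:R * `|y| * T.
  by rewrite -mulNr ler_wpM2r // -mulrN ler_wpM2l ?ler0n // -normrN ler_norm.
have e2 : 2%:R * `|y| * T <= 2%:R * `|y| * (M * (x ^+ 2 + y ^+ 2)).
  by rewrite ler_wpM2l // mulr_ge0 ?ler0n.
have e3 : 2%:R * `|y| * M * (x ^+ 2 + y ^+ 2) < be * d * (x ^+ 2 + y ^+ 2).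
  by rewrite ltr_pM2r.
have -> : F (x ^+ 2) y = 2%:R * y * T + be * d * (x ^+ 2 + y ^+ 2).
  by rewrite /elimF /T hc0; ring.
rewrite mulrA in e2; rewrite gt_eqF //; lra.
Qed.

Lemma limit_of_zeros_origin : limit_of_zeros 0 0 <-> c != 0.
Proof.
split=> [H|hc0].
  apply/eqP => hc0; have [r hr Hr] := elimF_neq0_near_origin hc0.
  have [x [y [hx hF hxr hyr]]] := H r hr; rewrite !subr0 in hxr hyr.
  by have := Hr x y hxr hyr hx; rewrite hF eqxx.
have hcp : 0 < c by rewrite lt_neqAle eq_sym hc0 hc.
have hL0 : L 0 = be * d by rewrite /elimL; ring.
have hbd : 0 < be * d by rewrite mulr_gt0.
have hK0 : 0 < K 0.
  rewrite /elimK /dampRe; have := mulr_gt0 hb hcp; have := sqr_ge0 (c + d * 0 + 0 ^+ 2).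
  lra.
apply: (limit_of_zeros_signs (tau := L 0)).
  by apply: elimF_sign_lin; rewrite ?elimF0 ?mul0r // hL0 gt_eqF.
move=> r hr; have hm1 : (-1 : R) != 0 by rewrite oppr_eq0 oner_eq0.
have [h [hh hpos]] := lowest_term_sign (n := 1) (cont_at_elimK 0) hm1 (lt0r_neq0 hK0) isT hr.
exists h; rewrite subr0; split=> //.
by rewrite hL0 elimF0; rewrite expr1 mulN1r oppr_gt0 in hpos; nra.
Qed.

Lemma limit_of_zerosE x0 y0 : limit_of_zeros x0 y0 <->
  (x0 = 0 /\ y0 = 0 /\ c != 0) \/ (y0 != 0 /\ F (x0 ^+ 2) y0 = 0).
Proof.
split=> [H|[[-> [-> hc0]]|[hy0 hF]]]; last 2 first.
- exact/limit_of_zeros_origin.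
- have [hx0|hx0] := eqVneq x0 0; last first.
    by move=> e he; exists x0, y0; rewrite !subrr normr0.
  rewrite hx0 expr0n elimF0 in hF *; apply: (limit_of_zeros_axis hy0).
  by move/eqP: hF; rewrite mulf_eq0 (negbTE hy0) => /eqP.
have hF := limit_of_zeros_root H.
have [hy0|hy0] := eqVneq y0 0; last by right.
have hx0 : x0 = 0.
  move: hF; rewrite hy0 (_ : F _ 0 = be * d * x0 ^+ 2); last by rewrite /elimF; ring.
  by move/eqP; rewrite !mulf_eq0 (gt_eqF hb) (gt_eqF hd) /= orbb => /eqP.
by left; split=> //; split=> //; move: H; rewrite hx0 hy0 => /limit_of_zeros_origin.
Qed.

End LimitsOfZeros.

Section RiemannSphere.
Variable R : rcfType.
Local Notation Re := (@complex.Re R).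
Local Notation Im := (@complex.Im R).

Lemma normc_lt_ReIm (z : R[i]) (e : R) : `|z| < e%:C -> `|Re z| < e /\ `|Im z| < e.
Proof.
rewrite normc_def ltcR => hz.
have he : 0 < e by apply: le_lt_trans hz; apply: sqrtr_ge0.
have : Re z ^+ 2 + Im z ^+ 2 < e ^+ 2.
  by rewrite -(ltr_sqrt _ (exprn_gt0 2 he)) sqrtr_sqr gtr0_norm.
rewrite -(real_normK (num_real (Re z))) -(real_normK (num_real (Im z))).
by have := normr_ge0 (Re z); have := normr_ge0 (Im z); split; nra.
Qed.

Lemma ReIm_lt_normc (z : R[i]) (e : R) : 0 < e ->
  `|Re z| < e / 2%:R -> `|Im z| < e / 2%:R -> `|z| < e%:C.
Proof.
move=> he hre him; rewrite normc_def ltcR.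
rewrite -[X in _ < X](gtr0_norm he) -sqrtr_sqr ltr_sqrt ?exprn_gt0 //.
rewrite -(real_normK (num_real (Re z))) -(real_normK (num_real (Im z))).
by have := normr_ge0 (Re z); have := normr_ge0 (Im z); nra.
Qed.

Lemma extC_closure_SomeE (c d be : R) (w0 : R[i]) :
  extC_closure (minus_iR (W_beta c d be)) (Some w0) <->
  limit_of_zeros c d be (Re w0) (Im w0).
Proof.
split=> H e he.
  have [w [[hW hx] /normc_lt_ReIm[]]] := H e he; rewrite ReD ImD ReN ImN => hre him.
  by exists (Re w), (Im w); split=> //; apply/(W_beta_offiR _ _ _ hx).
have [x [y [hx hF hre him]]] := H _ (divr_gt0 he (ltr0n R 2)).
exists (x +i* y); split; first by split=> //; apply/(W_beta_offiR c d be (w := x +i* y) hx).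
by apply: ReIm_lt_normc; rewrite ?ReD ?ImD ?ReN ?ImN.
Qed.

End RiemannSphere.

Theorem proposition3p7 (R : realType) (c d beta : R)
  (hc : 0 <= c) (hd : 0 < d) (hbeta : 0 < beta) (z : extC R) :
  extC_closure (minus_iR (W_beta c d beta)) z <->
  (z = None
   \/ (z = Some 0 /\ c != 0)
   \/ (exists w : R[i], z = Some w /\ imC w != 0 /\
        exists s1 s2 : bool,
          (reC w)%:C =
          sgnb R s1 * sqrtc ((Pfun c d beta (imC w))%:C
             + sgnb R s2 * sqrtc ((Pfun c d beta (imC w) ^+ 2
                                   - Qfun c d beta (imC w))%:C)
             - (imC w ^+ 2)%:C))).
Proof.
case: z => [w0|]; last by split=> _; left.
rewrite extC_closure_SomeE limit_of_zerosE //.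
split=> [[[hx [hy hc0]]|[hy hF]]|[//|[[[->] hc0]|[w [[->] [hy hw]]]]]].
- by right; left; split=> //; congr Some; exact: complex_ext.
- by right; right; exists w0; split=> //; split=> //; apply/(branch_formulaP _ _ _ hy).
- by left.
- by right; split=> //; apply/(branch_formulaP _ _ _ hy).
Qed.
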